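(* A norm $\|\cdot\|$ on $\mathbb{R}^2$ is an $F$-norm if and only if (i) it is radially symmetric, i.e. $\|(x_0,x_1)\|=\|(|x_0|,|x_1|)\|$, and (ii) the Lebesgue derivative of $t\mapsto\|(t,1)\|$ on $[0,\infty)$ is almost everywhere equal to a univariate distribution function $F$ on $[0,\infty)$ with finite first moment equal to $\|(0,1)\|$. In that case $\|\cdot\|=\|\cdot\|_F$.
   Context: For a random variable $X\ge0$ a.s. with $0<E(X)<\infty$ and distribution function $F$, $\|(x_0,x_1)\|_F=E(\max(|x_0|,|x_1|X))$; an $F$-norm on $\mathbb{R}^2$ is any norm of this form. *)

From HB Require Import structures.
From mathcomp Require Import all_boot all_order all_algebra.
From mathcomp Require Import all_classical all_reals all_analysis.
Set Implicit Arguments. Unset Strict Implicit. Unset Printing Implicit Defensive.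
Import Order.TTheory GRing.Theory Num.Theory.
Import numFieldNormedType.Exports.
Local Open Scope classical_set_scope.
Local Open Scope ring_scope.

Definition is_norm2 (R : realType) (N : R * R -> R) : Prop :=
  [/\ (forall x0 x1, N (x0, x1) = 0 -> x0 = 0 /\ x1 = 0),
      (forall a x0 x1, N (a * x0, a * x1) = `|a| * N (x0, x1)) &
      (forall x0 x1 y0 y1, N (x0 + y0, x1 + y1) <= N (x0, x1) + N (y0, y1))].

Definition cdf (R : realType) (mu : probability R R) (t : R) : R :=
  fine (mu [set` `]-oo, t]]).

(* The F-norm attached to the law mu of X (i.e. F = cdf mu):
   ||(x0,x1)||_F = E max(|x0|, |x1| X) = \int max(|x0|,|x1| y) dmu(y). *)
Definition Fnorm_eq (R : realType) (N : R * R -> R) (mu : probability R R) : Prop :=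
  forall x0 x1 : R,
    ((N (x0, x1))%:E = \int[mu]_y (Num.max `|x0| (`|x1| * y))%:E)%E.

Definition Fnorm_law (R : realType) (mu : probability R R) : Prop :=
  [/\ mu [set` `]-oo, 0[] = 0%E,
      mu.-integrable setT (fun y : R => y%:E) &
      (0 < \int[mu]_y y%:E)%E].

Definition is_Fnorm (R : realType) (N : R * R -> R) : Prop :=
  exists mu : probability R R, Fnorm_law mu /\ Fnorm_eq N mu.

Definition radially_symmetric (R : realType) (N : R * R -> R) : Prop :=
  forall x0 x1, N (x0, x1) = N (`|x0|, `|x1|).

Definition cond_ii (R : realType) (N : R * R -> R) (mu : probability R R) : Prop :=
  [/\ mu [set` `]-oo, 0[] = 0%E,
      mu.-integrable setT (fun y : R => y%:E),
      (\int[mu]_y y%:E = (N (0, 1))%:E)%E &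
      {ae (@lebesgue_measure R), forall t : R, t \in `[0, +oo[ ->
          derivable (fun s : R => N (s, 1)) t 1 /\
          derive1 (fun s : R => N (s, 1)) t = cdf mu t}].

(* Write G t = E max(t, X) = ||(t, 1)||_F, with F the distribution function of X.
   As max t y - max s y lies between (t - s) 1_{y <= s} and (t - s) 1_{y <= t},
   (t - s) F s <= G t - G s <= (t - s) F t, so G' = F away from the countably many
   jumps of F: this gives the necessity of (ii).
   Conversely, t |-> ||(t, 1)|| is convex, so between two points a < b where its
   derivative equals F its increment obeys the same bounds, and h = ||(., 1)|| - G
   satisfies |h b - h a| <= (b - a) (F b - F a). Repeated splitting of [a, b] shows
   that h is constant on the dense set of such points, hence on [0, +oo) as h is
   Lipschitz, and h 0 = 0 since E X = ||(0, 1)||. Comparing slopes at infinity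
   gives ||(1, 0)|| = 1, and homogeneity with radial symmetry then yields
   ||(x0, x1)|| = |x1| G (|x0| / |x1|) = ||(x0, x1)||_F. *)

From Pilot Require Import Defs.
From mathcomp Require Import all_boot all_order all_algebra.
From mathcomp Require Import all_classical all_reals all_analysis.
From mathcomp Require Import measurable_realfun ring lra.
Set Implicit Arguments. Unset Strict Implicit. Unset Printing Implicit Defensive.
Import Order.TTheory GRing.Theory Num.Theory.
Import numFieldNormedType.Exports.
(* Re-import so that [cdf] denotes the distribution function of Defs, not the
   one of random_variable. *)
Import Defs.
Local Open Scope classical_set_scope.
Local Open Scope ring_scope.

Section Norm2.
Variables (R : realType) (N : R * R -> R).
Hypothesis hN : is_norm2 N.

Lemma norm2Z a x y : N (a * x, a * y) = `|a| * N (x, y).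
Proof. by case: hN. Qed.

Lemma norm2D x0 x1 y0 y1 : N (x0 + y0, x1 + y1) <= N (x0, x1) + N (y0, y1).
Proof. by case: hN. Qed.

Lemma norm2N x y : N (- x, - y) = N (x, y).
Proof. by rewrite -[- x]mulN1r -[- y]mulN1r norm2Z normrN normr1 mul1r. Qed.

Lemma norm2_ge0 x y : 0 <= N (x, y).
Proof.
have N00 : N (0, 0) = 0 by have := norm2Z 0 0 0; rewrite normr0 !mul0r.
by have := norm2D x y (- x) (- y); rewrite norm2N !subrr N00; lra.
Qed.

Lemma norm2_01_gt0 : 0 < N (0, 1).
Proof.
rewrite lt_def norm2_ge0 andbT; apply/eqP; case: hN => def _ _.
by move/def => [_ /eqP]; rewrite oner_eq0.
Qed.

Lemma norm2_axis t : N (t, 0) = `|t| * N (1, 0).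
Proof. by rewrite -norm2Z mulr1 mulr0. Qed.

Lemma norm2_pscale a x : 0 <= a -> N (a * x, a) = a * N (x, 1).
Proof. by move=> a0; rewrite -{2}[a]mulr1 norm2Z ger0_norm. Qed.

Lemma norm2_chord x y z : x < y -> y < z ->
  (z - x) * N (y, 1) <= (z - y) * N (x, 1) + (y - x) * N (z, 1).
Proof.
move=> xy yz; have zy0 : 0 <= z - y by lra.
have yx0 : 0 <= y - x by lra.
have zx0 : 0 <= z - x by lra.
rewrite -!norm2_pscale //.
have -> : (z - x) * y = (z - y) * x + (y - x) * z by ring.
have -> : z - x = (z - y) + (y - x) by ring.
exact: norm2D.
Qed.

Lemma norm2_lipschitz s t : `|N (s, 1) - N (t, 1)| <= N (1, 0) * `|s - t|.
Proof.
have le u v : N (u, 1) <= N (v, 1) + N (1, 0) * `|u - v|.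
  by have := norm2D (u - v) 0 v 1; rewrite subrK add0r norm2_axis; lra.
by rewrite ler_norml; have := le s t; have := le t s; rewrite distrC; lra.
Qed.

Lemma norm2_asymptote t : 0 <= t -> `|N (t, 1) - t * N (1, 0)| <= N (0, 1).
Proof.
move=> t0; have := norm2N 0 1; rewrite oppr0 => n01.
have := norm2D t 0 0 1; have := norm2D t 1 0 (- 1).
rewrite !(addr0, add0r) subrr n01 norm2_axis ger0_norm //.
by rewrite ler_norml; lra.
Qed.

End Norm2.

Section RightDifferenceQuotient.
Variables (R : realType) (f : R -> R).

Lemma derive1_le_right_quotient s c d : derivable f s 1 -> 0 < d ->
  (forall h, 0 < h < d -> h^-1 * (f (h + s) - f s) <= c) -> derive1 f s <= c.
Proof.
move=> df d0 qc; rewrite derive1E /derive cvg_at_rightE //.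
apply: limr_le; first by apply/cvg_ex; eexists; exact: cvg_dnbhs_at_right df.
near=> h; rewrite /= [_%:A]mulr1; apply: qc; apply/andP; split.
- by near: h; exact: nbhs_right_gt.
- by near: h; exact: nbhs_right_lt.
Unshelve. all: by end_near. Qed.

Lemma derive1_ge_right_quotient s c d : derivable f s 1 -> 0 < d ->
  (forall h, 0 < h < d -> c <= h^-1 * (f (h + s) - f s)) -> c <= derive1 f s.
Proof.
move=> df d0 qc; rewrite derive1E /derive cvg_at_rightE //.
apply: limr_ge; first by apply/cvg_ex; eexists; exact: cvg_dnbhs_at_right df.
near=> h; rewrite /= [_%:A]mulr1; apply: qc; apply/andP; split.
- by near: h; exact: nbhs_right_gt.
- by near: h; exact: nbhs_right_lt.
Unshelve. all: by end_near. Qed.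

End RightDifferenceQuotient.

Section ConvexSlope.
Variables (R : realType) (f : R -> R).
Hypothesis f_chord : forall x y z, x < y -> y < z ->
  (z - x) * f y <= (z - y) * f x + (y - x) * f z.

Lemma convex_derive1_le_slope s t : s < t -> derivable f s 1 ->
  derive1 f s * (t - s) <= f t - f s.
Proof.
move=> st df; have ts0 : 0 < t - s by rewrite subr_gt0.
rewrite -ler_pdivlMr //; apply: (derive1_le_right_quotient df ts0).
move=> h /andP[h0 hts]; rewrite mulrC ler_pdivrMr // mulrAC ler_pdivlMr //.
have := @f_chord s (h + s) t; rewrite ltrDr h0 -ltrBrDr hts.
move=> /(_ isT isT); lra.
Qed.

Lemma convex_derive1_ge_slope s t : s < t -> derivable f t 1 ->
  f t - f s <= derive1 f t * (t - s).
Proof.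
move=> st dt; have ts0 : 0 < t - s by rewrite subr_gt0.
rewrite -ler_pdivrMr //; apply: (derive1_ge_right_quotient dt ltr01).
move=> h /andP[h0 _]; rewrite [h^-1 * _]mulrC ler_pdivlMr // mulrAC ler_pdivrMr //.
have := @f_chord s t (h + t); rewrite st ltrDr h0.
move=> /(_ isT isT); lra.
Qed.

End ConvexSlope.

Section DistributionFunction.
Variables (R : realType) (mu : probability R R).

Lemma cdfE s : cdf mu s = \int[mu]_y \1_`]-oo, s] y.
Proof. by rewrite /cdf /Rintegral integral_indic ?setIT. Qed.

Lemma cdf_ge0 s : 0 <= cdf mu s.
Proof. by rewrite /cdf fine_ge0. Qed.

Lemma cdf_le1 s : cdf mu s <= 1.
Proof. by rewrite /cdf -lee_fin fineK ?fin_num_measure ?probability_le1. Qed.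

Lemma cdf_nondecreasing : nondecreasing_fun (cdf mu).
Proof.
move=> s t st; rewrite /cdf fine_le ?fin_num_measure //.
by rewrite le_measure ?inE //; exact: subitvPr.
Qed.

End DistributionFunction.

Section MeanMax.
Variables (R : realType) (mu : probability R R).
Hypothesis mu_int : mu.-integrable setT (fun y : R => y%:E).

(* [mean_max t] is ||(t, 1)||_F = E max(t, X) for X of law [mu]. *)
Definition mean_max (t : R) : R := \int[mu]_y Num.max t y.

Lemma integrable_max a : mu.-integrable setT (EFin \o Num.max a).
Proof.
apply: (@le_integrable _ _ _ mu setT measurableT _ (fun y => (`|a| + `|y|)%:E)).
- by apply/measurable_EFinP; exact: measurable_maxr.
- move=> y _ /=; rewrite lee_fin [X in _ <= X]ger0_norm ?addr_ge0 //.
  have := normr_ge0 a; have := normr_ge0 y.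
  by case: (leP a y) => _; lra.
- have int_id : mu.-integrable setT (EFin \o id) := mu_int.
  have := integrableD measurableT (finite_measure_integrable_cst mu `|a| measurableT)
    (integrable_norm int_id).
  by apply: (eq_integrable measurableT) => y _.
Qed.

Lemma mean_maxE t : (mean_max t)%:E = (\int[mu]_y (Num.max t y)%:E)%E.
Proof.
rewrite /mean_max /Rintegral fineK //.
by rewrite (integrable_fin_num measurableT (integrable_max t)).
Qed.

Lemma mean_max_increment s t : s <= t ->
  (t - s) * cdf mu s <= mean_max t - mean_max s <= (t - s) * cdf mu t.
Proof.
move=> st.
have int_ind r : mu.-integrable setT (EFin \o (fun y => (t - s) * \1_`]-oo, r] y)).
  apply: (eq_integrable measurableT
    (fun y => ((t - s)%:E * (\1_`]-oo, r] y)%:E)%E)) => //.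
  exact/integrableZl/integrable_indic.
have int_diff : mu.-integrable setT (EFin \o (fun y => Num.max t y - Num.max s y)).
  apply: (eq_integrable measurableT
    (fun y => ((Num.max t y)%:E - (Num.max s y)%:E)%E)) => //.
  exact: integrableB (integrable_max t) (integrable_max s).
rewrite /mean_max -RintegralB ?integrable_max // !cdfE -!RintegralZl //;
  try exact: integrable_indic.
have indic_le r y : \1_`]-oo, r] y = (if y <= r then 1 else 0 : R).
  by rewrite indicE mem_setE in_itv /=; case: (y <= r).
apply/andP; split; apply: le_Rintegral => // y _; rewrite !indic_le;
  by case: (leP y s) => ?; case: (leP y t) => ?; case: (leP s y) => ?;
    case: (leP t y) => ?; lra.
Qed.

Lemma mean_max_ge t : t <= mean_max t.
Proof.
have := @le_Rintegral _ _ _ mu setT (cst t) (Num.max t) measurableT.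
have mu1 : fine (mu setT) = 1 by rewrite (probability_setT mu).
rewrite Rintegral_cst // mu1 mulr1; apply => //.
- exact: finite_measure_integrable_cst.
- exact: integrable_max.
- by move=> y _; rewrite le_max lexx.
Qed.

Lemma mean_max_lipschitz s t : `|mean_max t - mean_max s| <= `|t - s|.
Proof.
wlog st : s t / s <= t.
  move=> W; have [|ts] := leP s t; first exact: W.
  by rewrite distrC [`|t - s|]distrC; apply: W; rewrite ltW.
have /andP[lo up] := mean_max_increment st.
have := cdf_ge0 mu s; have := cdf_le1 mu t.
rewrite [`|t - s|]ger0_norm ?subr_ge0 // ler_norml => ? ?; apply/andP; split; nra.
Qed.

Lemma mean_max_slope_dist s t : s != t ->
  `|cdf mu t - (mean_max s - mean_max t) / (s - t)| <= `|cdf mu t - cdf mu s|.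
Proof.
move=> st; have st0 : s - t != 0 by rewrite subr_eq0.
have key : `|mean_max s - mean_max t - (s - t) * cdf mu t| <=
    `|s - t| * `|cdf mu t - cdf mu s|.
  have [le_ts|lt_st] := leP t s.
    have /andP[lo up] := mean_max_increment le_ts.
    have Fts := cdf_nondecreasing mu le_ts.
    rewrite [`|s - t|]ger0_norm ?subr_ge0 // [`|_ - cdf mu s|]ler0_norm ?subr_le0 //.
    by rewrite ler_norml; apply/andP; split; nra.
  have /andP[lo up] := mean_max_increment (ltW lt_st).
  have Fst := cdf_nondecreasing mu (ltW lt_st).
  rewrite [`|s - t|]ltr0_norm ?subr_lt0 // [`|_ - cdf mu s|]ger0_norm ?subr_ge0 //.
  by rewrite ler_norml; apply/andP; split; nra.
have -> : cdf mu t - (mean_max s - mean_max t) / (s - t) =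
    - ((mean_max s - mean_max t - (s - t) * cdf mu t) / (s - t)) by field.
by rewrite normrN normf_div ler_pdivrMr ?normr_gt0 // [X in _ <= X]mulrC.
Qed.

Lemma is_derive_mean_max t : {for t, continuous (cdf mu)} ->
  is_derive t 1 mean_max (cdf mu t).
Proof.
move=> cF; apply/is_derive1_caratheodory.
pose g z := if z == t then cdf mu t else (mean_max z - mean_max t) / (z - t).
exists g; split; last by rewrite /g eqxx.
- move=> z; rewrite /g; have [->|zt] := eqVneq z t; first by rewrite !subrr mulr0.
  by rewrite divfK // subr_eq0.
- apply/cvgrPdist_le => e e0; move/cvgrPdist_le : cF => /(_ e e0).
  apply: filterS => z Fz; rewrite /g eqxx; have [_|zt] := eqVneq z t.
    by rewrite subrr normr0 ltW.
  exact: le_trans (mean_max_slope_dist zt) Fz.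
Qed.

Lemma mean_max0 :
  mu [set` `]-oo, 0[] = 0%E -> (mean_max 0)%:E = (\int[mu]_y y%:E)%E.
Proof.
move=> mu0; rewrite mean_maxE; apply: ae_eq_integral => //.
- by apply/measurable_EFinP; exact: measurable_maxr.
- exists `]-oo, 0[%classic; split => // y /= y0; rewrite in_itv /=.
  by rewrite ltNge; apply/negP => /max_r ymax; apply: y0 => _; rewrite ymax.
Qed.

End MeanMax.

Section Nondecreasing.
Variables (R : realType) (F : R -> R).
Hypothesis ndF : nondecreasing_fun F.

Lemma nondecreasing_continuous_at t : ~ discontinuity F t -> {for t, continuous F}.
Proof.
move=> ndisc.
have cl : cvg (F x @[x --> t^'-]).
  apply: nondecreasing_at_left_is_cvgr; first by near=> x => a b _ _; exact: ndF.
  near=> x; exists (F t) => z [y /=]; rewrite in_itv /= => /andP[_ /ltW yt] <-.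
  exact: ndF.
have cr : cvg (F x @[x --> t^'+]).
  apply: nondecreasing_at_right_is_cvgr; first by near=> x => a b _ _; exact: ndF.
  near=> x; exists (F t) => z [y /=]; rewrite in_itv /= => /andP[/ltW ty _] <-.
  exact: ndF.
have lFt : lim (F x @[x --> t^'-]) <= F t.
  by apply: limr_le => //; near=> x; apply/ndF/ltW; near: x; exact: nbhs_left_lt.
have Ftr : F t <= lim (F x @[x --> t^'+]).
  by apply: limr_ge => //; near=> x; apply/ndF/ltW; near: x; exact: nbhs_right_gt.
have elr : lim (F x @[x --> t^'-]) = lim (F x @[x --> t^'+]).
  by apply/eqP; apply: contrapT => /negP ne; apply: ndisc.
have eFt : lim (F x @[x --> t^'-]) = F t by apply/eqP; rewrite eq_le lFt elr Ftr.
by apply/left_right_continuousP; split; [rewrite -eFt | rewrite -eFt elr].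
Unshelve. all: by end_near. Qed.

Lemma nondecreasing_discontinuity_countable : countable [set t | discontinuity F t].
Proof.
apply: (@sub_countable _ _ _
  (\bigcup_(n in [set: nat]) [set t | (t \in `](- n%:R), n%:R[) /\ discontinuity F t])).
  apply: subset_card_le => t dt; exists (Num.truncn `|t|).+1 => //; split => //.
  by rewrite in_itv /= -ltr_norml truncnS_gt.
apply: bigcup_countable => [|n _]; first exact: countableP.
by apply: discontinuity_countable => x y _ _; exact: ndF.
Qed.

End Nondecreasing.

Lemma countable_lebesgue_negligible (R : realType) (A : set R) :
  countable A -> (@lebesgue_measure R).-negligible A.
Proof.
move=> cA; have mA : measurable A.
  by apply: countable_measurable => // t; exact: measurable_set1.
by apply/negligibleP => //; exact: countable_lebesgue_measure0.
Qed.

Lemma ae_lebesgue_dense (R : realType) (P : R -> Prop) :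
  {ae (@lebesgue_measure R), forall t, P t} ->
  forall u v, u < v -> exists2 t, P t & u < t < v.
Proof.
move=> aeP u v uv; apply: contrapT => noP.
have : (@lebesgue_measure R).-negligible `]u, v[%classic.
  by apply: negligibleS aeP => t /= tuv Pt; apply: noP; exists t; rewrite -?in_itv.
have muv : (@lebesgue_measure R) [set` `]u, v[] = (v - u)%:E.
  by rewrite lebesgue_measure_itv /= lte_fin uv -EFinD.
move=> [A [mA A0 uvA]]; have : ((v - u)%:E <= (@lebesgue_measure R) A)%E.
  by rewrite -muv le_measure ?inE //; exact: measurable_itv.
by rewrite A0 lee_fin subr_le0 leNgt uv.
Qed.

Lemma eq0_of_bounded_multiples (R : realType) (x K : R) :
  (forall n : nat, `|x| * n%:R <= K) -> x = 0.
Proof.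
move=> xK; apply/normr0_eq0/eqP; rewrite eq_le normr_ge0 andbT leNgt.
apply/negP => x0; have := xK (Num.truncn (K / `|x|)).+1.
by have := truncnS_gt (K / `|x|); rewrite ltr_pdivrMr // mulrC; lra.
Qed.

Definition dense_on_nonneg (R : realType) (D : set R) :=
  forall u v, 0 <= u -> u < v -> exists2 t, D t & u < t < v.

Section ConstantOnDense.
Variables (R : realType) (h F : R -> R) (D : set R).
Hypothesis ndF : nondecreasing_fun F.
Hypothesis D_ge0 : forall t, D t -> 0 <= t.
Hypothesis D_dense : dense_on_nonneg D.
Hypothesis h_increment : forall a b, D a -> D b -> a < b ->
  `|h b - h a| <= (b - a) * (F b - F a).

(* Splitting [a, b] at a point of [D] in its middle half multiplies the area
   (b - a) (F b - F a) by at most 3/4; this pays for raising n + 3 by one. *)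
Lemma scaled_increment_le_area n a b : D a -> D b -> a < b ->
  `|h b - h a| * (n + 3)%:R <= 3 * ((b - a) * (F b - F a)).
Proof.
elim: n a b => [|n IH] a b Da Db ab.
  by rewrite add0n mulrC ler_pM2l //; exact: h_increment.
have [m Dm /andP[am mb]] : exists2 m, D m & a + (b - a) / 4 < m < b - (b - a) / 4.
  by apply: D_dense; have := D_ge0 Da; lra.
have am' : a < m by lra.
have mb' : m < b by lra.
have IHa := IH a m Da Dm am'; have IHb := IH m b Dm Db mb'.
rewrite addSn -natr1; set k := (n + 3)%:R in IHa IHb *.
have k3 : 3 <= k by rewrite /k ler_nat leq_addl.
have tri : `|h b - h a| <= `|h m - h a| + `|h b - h m|.
  by rewrite (_ : h b - h a = (h m - h a) + (h b - h m)) ?ler_normD //; ring.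
have trik : `|h b - h a| * k <= `|h m - h a| * k + `|h b - h m| * k.
  by rewrite -mulrDl ler_wpM2r // (le_trans _ k3).
have Fam : 0 <= F m - F a by rewrite subr_ge0 ndF // ltW.
have Fmb : 0 <= F b - F m by rewrite subr_ge0 ndF // ltW.
have Aa : (m - a) * (F m - F a) <= 3 / 4 * (b - a) * (F m - F a).
  by apply: ler_wpM2r => //; lra.
have Ab : (b - m) * (F b - F m) <= 3 / 4 * (b - a) * (F b - F m).
  by apply: ler_wpM2r => //; lra.
have low : 3 * `|h b - h a| <= `|h b - h a| * k by rewrite mulrC ler_wpM2l.
lra.
Qed.

Lemma const_of_increment_le_area a b : D a -> D b -> h a = h b.
Proof.
suff lt_const u v : D u -> D v -> u < v -> h u = h v.
  move=> Da Db; have [ab|ba|->] := ltgtP a b => //; first exact: lt_const.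
  by rewrite (lt_const b a).
move=> Du Dv uv; apply/eqP; rewrite eq_sym -subr_eq0; apply/eqP.
apply: (@eq0_of_bounded_multiples _ _ (3 * ((v - u) * (F v - F u)))) => n.
apply: le_trans (scaled_increment_le_area n Du Dv uv); apply: ler_wpM2l => //.
by rewrite ler_nat leq_addr.
Qed.

End ConstantOnDense.

Lemma lipschitz_const_of_dense (R : realType) (h : R -> R) (k : R) (D : set R) :
  0 <= k -> (forall x y, `|h x - h y| <= k * `|x - y|) -> dense_on_nonneg D ->
  (forall a b, D a -> D b -> h a = h b) ->
  forall s t, 0 <= s -> 0 <= t -> h s = h t.
Proof.
move=> k0 hk Ddense hD s t s0 t0; apply/eqP; rewrite -subr_eq0 -normr_le0.
apply/ler_addgt0Pr => e e0; rewrite add0r.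
pose d := e / (2 * k + 1).
have k1 : 0 < 2 * k + 1 by lra.
have d0 : 0 < d by rewrite divr_gt0.
have ed : (2 * k + 1) * d = e by rewrite /d mulrC divfK ?gt_eqF.
have [a Da /andP[sa ad]] := Ddense s (s + d) s0 (ltr_pwDr d0 (lexx s)).
have [b Db /andP[tb bd]] := Ddense t (t + d) t0 (ltr_pwDr d0 (lexx t)).
have sa' : `|s - a| <= d by rewrite distrC ger0_norm; lra.
have tb' : `|b - t| <= d by rewrite ger0_norm; lra.
have := ler_wpM2l k0 sa'; have := ler_wpM2l k0 tb'.
have := hk s a; have := hk b t.
rewrite (_ : h s - h t = (h s - h a) + (h b - h t)); last first.
  by rewrite (hD a b Da Db); ring.
by move=> *; apply: le_trans (ler_normD _ _) _; lra.
Qed.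

Section Sufficiency.
Variables (R : realType) (N : R * R -> R) (mu : probability R R).
Hypothesis hN : is_norm2 N.
Hypothesis mu_int : mu.-integrable setT (fun y : R => y%:E).

Let f t := N (t, 1).
Let h t := f t - mean_max mu t.

Lemma norm2_sub_mean_max_increment a b :
  derivable f a 1 -> derivable f b 1 ->
  derive1 f a = cdf mu a -> derive1 f b = cdf mu b -> a < b ->
  `|h b - h a| <= (b - a) * (cdf mu b - cdf mu a).
Proof.
move=> da db fa fb ab.
have ls := convex_derive1_le_slope (norm2_chord hN) ab da; rewrite fa in ls.
have gs := convex_derive1_ge_slope (norm2_chord hN) ab db; rewrite fb in gs.
have /andP[lo up] := mean_max_increment mu_int (ltW ab).
rewrite /f in ls gs.
by rewrite /h /f ler_norml; apply/andP; split; lra.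
Qed.

Let D t := [/\ 0 < t, derivable f t 1 & derive1 f t = cdf mu t].

Lemma norm2_eq_mean_max : dense_on_nonneg D ->
  N (0, 1) = mean_max mu 0 -> forall t, 0 <= t -> N (t, 1) = mean_max mu t.
Proof.
move=> dense N01 t t0.
have k0 : 0 <= N (1, 0) + 1 by have := norm2_ge0 hN 1 0; lra.
have h_lip x y : `|h x - h y| <= (N (1, 0) + 1) * `|x - y|.
  rewrite (_ : h x - h y = (f x - f y) - (mean_max mu x - mean_max mu y)); last first.
    by rewrite /h /f; ring.
  rewrite mulrDl mul1r (le_trans (ler_normB _ _)) // lerD ?norm2_lipschitz //.
  by rewrite distrC [`|x - y|]distrC mean_max_lipschitz.
have h_const a b : D a -> D b -> h a = h b.
  apply: (const_of_increment_le_area (@cdf_nondecreasing _ mu)) => //.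
    by move=> s [/ltW].
  by move=> {}a {}b [_ da fa] [_ db fb]; exact: norm2_sub_mean_max_increment.
suff : h t = h 0 by rewrite /h /f N01 subrr => /eqP; rewrite subr_eq0 => /eqP.
exact: lipschitz_const_of_dense k0 h_lip dense h_const t 0 t0 (lexx 0).
Qed.

Hypothesis N_mean_max : forall t, 0 <= t -> N (t, 1) = mean_max mu t.

Lemma norm2_10_eq1 : N (1, 0) = 1.
Proof.
apply/eqP; rewrite -subr_eq0; apply/eqP.
apply: (@eq0_of_bounded_multiples _ _ (N (0, 1) + mean_max mu 0)) => n.
have n0 : 0 <= n%:R :> R by [].
have := norm2_asymptote hN n0; rewrite N_mean_max // ler_norml => /andP[lo up].
have /andP[_ inc] := mean_max_increment mu_int n0.
have Fn : n%:R * cdf mu n%:R <= n%:R by rewrite ler_piMr // cdf_le1.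
have := mean_max_ge mu_int n%:R; have := mean_max_ge mu_int 0.
rewrite -[X in _ * X]normr_nat -normrM mulrBl mul1r mulrC ler_norml.
by move=> *; apply/andP; split; lra.
Qed.

Lemma Fnorm_eq_of_mean_max : radially_symmetric N -> Fnorm_eq N mu.
Proof.
move=> rad x0 x1; have [->|x1_neq0] := eqVneq x1 0.
  rewrite norm2_axis // norm2_10_eq1 mulr1 (eq_integral (fun=> `|x0|%:E)); last first.
    by move=> y _; rewrite normr0 mul0r max_l.
  rewrite integral_cst // [X in (_ * X)%E](_ : _ = 1%E) ?mule1 //.
  exact: probability_setT.
have x1_gt0 : 0 < `|x1| by rewrite normr_gt0.
rewrite rad -[`|x0|](divfK (lt0r_neq0 x1_gt0)) mulrC norm2_pscale //.
rewrite N_mean_max ?divr_ge0 //.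
rewrite EFinM mean_maxE // -integralZl //; last exact: integrable_max.
by apply: eq_integral => y _; rewrite -EFinM maxr_pMr // ltW.
Qed.

End Sufficiency.

Lemma Fnorm_eq_of_cond_ii (R : realType) (N : R * R -> R) (mu : probability R R) :
  is_norm2 N -> radially_symmetric N -> cond_ii N mu -> Fnorm_eq N mu.
Proof.
move=> hN rad [mu0 mu_int mean ae_deriv].
apply: (Fnorm_eq_of_mean_max hN mu_int _ rad).
apply: (norm2_eq_mean_max hN mu_int); last first.
  by apply: EFin_inj; rewrite mean_max0 // mean.
move=> u v u0 uv; have [t Pt /andP[ut tv]] := ae_lebesgue_dense ae_deriv uv.
have t0 : 0 < t by apply: le_lt_trans ut.
exists t; last by rewrite ut tv.
by have [] := Pt; rewrite ?in_itv /= ?andbT ?ltW.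
Qed.

Lemma norm2_eq_mean_max_of_Fnorm_eq (R : realType) (N : R * R -> R)
    (mu : probability R R) :
  mu.-integrable setT (fun y : R => y%:E) -> Fnorm_eq N mu ->
  forall t, 0 <= t -> N (t, 1) = mean_max mu t.
Proof.
move=> mu_int E t t0; apply: EFin_inj; rewrite E normr1 ger0_norm // mean_maxE //.
by apply: eq_integral => y _; rewrite mul1r.
Qed.

Lemma cond_ii_of_Fnorm_eq (R : realType) (N : R * R -> R) (mu : probability R R) :
  Fnorm_law mu -> Fnorm_eq N mu -> cond_ii N mu.
Proof.
move=> [mu0 mu_int _] E; have NG := norm2_eq_mean_max_of_Fnorm_eq mu_int E.
split => //; first by rewrite NG // mean_max0.
have ndF := @cdf_nondecreasing _ mu.
apply: (negligibleS _ (negligibleU (countable_lebesgue_negligible (countable1 0))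
  (countable_lebesgue_negligible (nondecreasing_discontinuity_countable ndF)))).
move=> t /= nP; have [->|t_neq0] := eqVneq t 0; [by left | right].
apply: contrapT => cont; apply: nP; rewrite in_itv /= andbT => t_ge0.
have t_gt0 : 0 < t by rewrite lt_def t_neq0.
have := is_derive_mean_max mu_int (nondecreasing_continuous_at ndF cont).
move/(near_eq_is_derive (g := fun s => N (s, 1))) => -[].
  by near=> s; rewrite NG //; apply: ltW; near: s; exact: lt_nbhsr.
by move=> dN <-; rewrite derive1E.
Unshelve. all: by end_near. Qed.

Theorem corollary2p10 (R : realType) (N : R * R -> R) (hN : is_norm2 N) :
  (is_Fnorm N <->
     (radially_symmetric N /\ exists mu : probability R R, cond_ii N mu)) /\
  (forall mu : probability R R,
     radially_symmetric N -> cond_ii N mu -> Fnorm_eq N mu).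
Proof.
have Fnorm_rad mu : Fnorm_eq N mu -> radially_symmetric N.
  by move=> E x0 x1; apply: EFin_inj; rewrite !E !normr_id.
split; last by move=> mu; exact: Fnorm_eq_of_cond_ii.
split => [[mu [law E]]|[rad [mu ci]]].
  by split; [exact: Fnorm_rad E | exists mu; exact: cond_ii_of_Fnorm_eq].
exists mu; split; last exact: Fnorm_eq_of_cond_ii.
case: ci => mu0 mu_int mean _; split => //.
by rewrite mean lte_fin norm2_01_gt0.
Qed.
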